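(* Let $N, M_1, M_2, P, R_1, R_2, R_3, \widetilde{M}_2, \widetilde{P}$ be positive integers with $\widetilde{M}_2 \le M_2$, $\widetilde{P}\le P$. Let $\mathbf{y}\in\mathbb{C}^N$, $\mathbf{H}\in\mathbb{C}^{N\times M_1}$ and $\mathcal{M}\in\mathbb{R}^{N\times M_2\times P}$ be as in the context. Let $\mathbf{U}_2\in\mathbb{R}^{M_2\times\widetilde{M}_2}$ and $\mathbf{U}_3\in\mathbb{R}^{P\times\widetilde{P}}$ have orthonormal columns, and set $\widetilde{\mathcal{M}}=\mathcal{M}\times_2\mathbf{U}_2^\top\times_3\mathbf{U}_3^\top$ and $\widehat{\mathcal{M}}=\mathcal{M}\times_2\mathbf{U}_2\mathbf{U}_2^\top\times_3\mathbf{U}_3\mathbf{U}_3^\top$. Suppose $(\mathcal{G}^\star,\mathbf{A}^\star,\mathbf{B}^\star,\mathbf{C}^\star)$, with $\mathcal{G}^\star\in\mathbb{C}^{R_1\times R_2\times R_3}$, $\mathbf{A}^\star\in\mathbb{C}^{M_1\times R_1}$, $\mathbf{B}^\star\in\mathbb{C}^{M_2\times R_2}$, $\mathbf{C}^\star\in\mathbb{C}^{P\times R_3}$, attains $$m_{\mathrm{Tu}}:=\min_{\mathcal{G},\mathbf{A},\mathbf{B},\mathbf{C}}\Big\|\mathbf{y}-\sum_{r_1=1}^{R_1}\sum_{r_2=1}^{R_2}\sum_{r_3=1}^{R_3}\mathcal{G}_{r_1r_2r_3}\, \mathbf{H}\mathbf{A}_{:r_1}\odot\big(\mathcal{M}\times_2\mathbf{B}_{:r_2}\times_3\mathbf{C}_{:r_3}\big)\Big\|_F$$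 over $\mathcal{G}\in\mathbb{C}^{R_1\times R_2\times R_3},\mathbf{A}\in\mathbb{C}^{M_1\times R_1},\mathbf{B}\in\mathbb{C}^{M_2\times R_2},\mathbf{C}\in\mathbb{C}^{P\times R_3}$. Then $$\inf_{\substack{\mathcal{G},\ \mathbf{A}\\ \widetilde{\mathbf{B}}\in\mathbb{C}^{\widetilde{M}_2\times R_2}\\ \widetilde{\mathbf{C}}\in\mathbb{C}^{\widetilde{P}\times R_3}}}\Big\|\mathbf{y}-\sum_{r_1,r_2,r_3}\mathcal{G}_{r_1r_2r_3}\, \mathbf{H}\mathbf{A}_{:r_1}\odot\big(\widetilde{\mathcal{M}}\times_2\widetilde{\mathbf{B}}_{:r_2}\times_3\widetilde{\mathbf{C}}_{:r_3}\big)\Big\|_F \le m_{\mathrm{Tu}}+\|\mathcal{M}-\widehat{\mathcal{M}}\|_F\sum_{r_1,r_2,r_3}|\mathcal{G}^\star_{r_1r_2r_3}|\,\|\mathbf{H}\mathbf{A}^\star_{:r_1}\|_\infty\|\mathbf{B}^\star_{:r_2}\|_F\|\mathbf{C}^\star_{:r_3}\|_F,$$ where $\mathcal{G}$ ranges over $\mathbb{C}^{R_1\times R_2\times R_3}$, $\mathbf{A}$ over $\mathbb{C}^{M_1\times R_1}$, and the sums are over $1\le r_k\le R_k$.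
   Context: Let $x(t)$, $t\in\mathbb{Z}$, be a complex-valued input signal and $y(t)$ a complex-valued output signal, $t_0\in\mathbb{Z}$. Define $\mathbf{y}=(y(t_0),\dots,y(t_0+N-1))^\top\in\mathbb{C}^N$; $\mathbf{H}\in\mathbb{C}^{N\times M_1}$ with entries $h_{ni}=x(t_0+n-i)$ ($n=0,\dots,N-1$, $i=0,\dots,M_1-1$); and $\mathcal{M}\in\mathbb{R}^{N\times M_2\times P}$ with entries $\mathcal{M}_{njp}=|x(t_0+n-j)|^p$ ($j=0,\dots,M_2-1$, $p=0,\dots,P-1$, with $0^0=1$). Mode-$k$ product of a tensor $\mathcal{X}\in\mathbb{C}^{I_1\times I_2\times I_3}$ with a matrix $\mathbf{Q}\in\mathbb{C}^{n\times I_k}$: replace mode $k$ by $n$ with $(\mathcal{X}\times_k\mathbf{Q})_{\dots j\dots}=\sum_{i_k}\mathcal{X}_{\dots i_k\dots}q_{j i_k}$ (no conjugation). Mode-$k$ product with a vector $\mathbf{v}\in\mathbb{C}^{I_k}$ contracts mode $k$: $(\mathcal{X}\times_k\mathbf{v})=\sum_{i_k}\mathcal{X}_{\dots i_k\dots}v_{i_k}$, removing that mode; in particular $(\mathcal{M}\times_2\mathbf{b}\times_3\mathbf{c})_n=\sum_{j,p}\mathcal{M}_{njp}b_jc_p$. $\mathbf{A}_{:r}$ denotes the $r$-th column of $\mathbf{A}$; $\odot$ is the entrywise (Hadamard) product; $\|\cdot\|_F$ is the Frobenius (Euclidean for vectors) norm; $\|\cdot\|_\infty$ is the maximum modulus of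 the entries of a vector. *)

From HB Require Import structures.
From mathcomp Require Import all_boot all_order all_algebra.
From mathcomp Require Import complex.
From mathcomp Require Import classical_sets reals.

Set Implicit Arguments.
Unset Strict Implicit.
Unset Printing Implicit Defensive.

Import Order.TTheory GRing.Theory Num.Theory.
Local Open Scope ring_scope.

Section Defs.
Variable R : realType.
Local Notation C := (complex R).

Definition cR (r : R) : C := Complex r 0.

Definition cmod (z : C) : R := let: Complex a b := z in Num.sqrt (a ^+ 2 + b ^+ 2).

Definition cfrob (n : nat) (v : 'I_n -> C) : R :=
  Num.sqrt (\sum_(i < n) cmod (v i) ^+ 2).

Definition cinfnorm (n : nat) (v : 'I_n -> C) : R :=
  \big[Num.max/0]_(i < n) cmod (v i).

Definition rfrob3 (a b c : nat) (T : 'I_a -> 'I_b -> 'I_c -> R) : R :=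
  Num.sqrt (\sum_(i < a) \sum_(j < b) \sum_(k < c) T i j k ^+ 2).

Definition yvec (y : int -> C) (t0 : int) (N : nat) : 'I_N -> C :=
  fun n => y (t0 + (n : nat)%:Z).

Definition Hmat (x : int -> C) (t0 : int) (N M1 : nat) : 'M[C]_(N, M1) :=
  \matrix_(n < N, i < M1) x (t0 + (n : nat)%:Z - (i : nat)%:Z).

(* M in R^{N x M2 x P}, M_{njp} = |x(t0 + n - j)|^p  (0^0 = 1) *)
Definition Mten (x : int -> C) (t0 : int) (N M2 P : nat) :
  'I_N -> 'I_M2 -> 'I_P -> R :=
  fun n j p => cmod (x (t0 + (n : nat)%:Z - (j : nat)%:Z)) ^+ (p : nat).

(* mode-2 and mode-3 products with matrices: T x_2 Q2 x_3 Q3,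
   (.)_{n j' p'} = sum_{j,p} T_{n j p} Q2_{j' j} Q3_{p' p} *)
Definition mode23 (a b c b' c' : nat) (T : 'I_a -> 'I_b -> 'I_c -> R)
  (Q2 : 'M[R]_(b', b)) (Q3 : 'M[R]_(c', c)) : 'I_a -> 'I_b' -> 'I_c' -> R :=
  fun n j' p' => \sum_(j < b) \sum_(p < c) T n j p * Q2 j' j * Q3 p' p.

Definition mode23v (a b c : nat) (T : 'I_a -> 'I_b -> 'I_c -> R)
  (v : 'I_b -> C) (w : 'I_c -> C) : 'I_a -> C :=
  fun n => \sum_(j < b) \sum_(p < c) cR (T n j p) * v j * w p.

Definition HAcol (N M1 R1 : nat) (H : 'M[C]_(N, M1)) (A : 'M[C]_(M1, R1))
  (r : 'I_R1) : 'I_N -> C :=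
  fun n => (H *m A) n r.

Definition model (N M1 b c R1 R2 R3 : nat) (H : 'M[C]_(N, M1))
  (T : 'I_N -> 'I_b -> 'I_c -> R)
  (G : 'I_R1 -> 'I_R2 -> 'I_R3 -> C) (A : 'M[C]_(M1, R1))
  (B : 'M[C]_(b, R2)) (Cm : 'M[C]_(c, R3)) : 'I_N -> C :=
  fun n => \sum_(r1 < R1) \sum_(r2 < R2) \sum_(r3 < R3)
     G r1 r2 r3 * HAcol H A r1 n
       * mode23v T (fun j => B j r2) (fun p => Cm p r3) n.

Definition objective (N M1 b c R1 R2 R3 : nat) (yv : 'I_N -> C)
  (H : 'M[C]_(N, M1)) (T : 'I_N -> 'I_b -> 'I_c -> R)
  (G : 'I_R1 -> 'I_R2 -> 'I_R3 -> C) (A : 'M[C]_(M1, R1))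
  (B : 'M[C]_(b, R2)) (Cm : 'M[C]_(c, R3)) : R :=
  cfrob (fun n => yv n - model H T G A B Cm n).

End Defs.

Arguments yvec {R} y t0 N _.
Arguments Hmat {R} x t0 N M1.
Arguments Mten {R} x t0 N M2 P _ _ _.

(** Take [Bt := U2^T Bs] and [Ct := U3^T Cs]. Since
    [Mt x_2 (U2^T B) x_3 (U3^T C) = Mh x_2 B x_3 C], the compressed objective
    at [(Gs, As, Bt, Ct)] is the norm of [y - model M + model (M - Mh)], all
    models taken at [(Gs, As, Bs, Cs)]; the triangle inequality reduces the
    claim to bounding [model (M - Mh)] term by term. For a single term,
    Cauchy-Schwarz in modes 2 and 3 gives
    [|((M - Mh) x_2 b x_3 c)_n| <= ||(M - Mh)_n||_F ||b|| ||c||], and the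
    factor [(H A_r1)_n] is bounded by its sup norm. *)

From HB Require Import structures.
From mathcomp Require Import all_boot all_order all_algebra.
From mathcomp Require Import complex.
From mathcomp Require Import classical_sets reals.
From mathcomp Require Import ring lra.

Set Implicit Arguments.
Unset Strict Implicit.
Unset Printing Implicit Defensive.

Import Order.TTheory GRing.Theory Num.Theory.
Local Open Scope ring_scope.

Section CauchySchwarz.
Variable R : rcfType.

Lemma cauchy_schwarz_sqr n (a b : 'I_n -> R) :
  (\sum_i a i * b i) ^+ 2 <= (\sum_i a i ^+ 2) * (\sum_i b i ^+ 2).
Proof.
pose Sa := \sum_i a i ^+ 2; pose Sb := \sum_i b i ^+ 2; pose Sab := \sum_i a i * b i.
have lagrange : \sum_i \sum_j (a i * b j - a j * b i) ^+ 2 = 2 * (Sa * Sb - Sab ^+ 2).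
  have eSaSb : \sum_i \sum_j a i ^+ 2 * b j ^+ 2 = Sa * Sb by rewrite big_distrlr.
  have eSbSa : \sum_i \sum_j a j ^+ 2 * b i ^+ 2 = Sa * Sb.
    by rewrite exchange_big eSaSb.
  have eSab : \sum_i \sum_j a i * b i * (a j * b j) = Sab ^+ 2.
    by rewrite expr2 big_distrlr.
  transitivity (\sum_i (\sum_j a i ^+ 2 * b j ^+ 2 + \sum_j a j ^+ 2 * b i ^+ 2
      - 2 * \sum_j a i * b i * (a j * b j))).
    apply: eq_bigr => i _; rewrite mulr_sumr -big_split -sumrB.
    by apply: eq_bigr => j _ /=; ring.
  by rewrite sumrB big_split /= -mulr_sumr eSaSb eSbSa eSab; ring.
have : 0 <= \sum_i \sum_j (a i * b j - a j * b i) ^+ 2.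
  by apply: sumr_ge0 => i _; apply: sumr_ge0 => j _; exact: sqr_ge0.
by rewrite lagrange pmulr_rge0 ?ltr0n // subr_ge0.
Qed.

Lemma cauchy_schwarz n (a b : 'I_n -> R) :
  \sum_i a i * b i <= Num.sqrt (\sum_i a i ^+ 2) * Num.sqrt (\sum_i b i ^+ 2).
Proof.
apply: le_trans (ler_norm _) _.
rewrite -sqrtr_sqr -sqrtrM; last by apply: sumr_ge0 => i _; exact: sqr_ge0.
exact/ler_wsqrtr/cauchy_schwarz_sqr.
Qed.

Lemma minkowski n (a b : 'I_n -> R) :
  Num.sqrt (\sum_i (a i + b i) ^+ 2) <=
  Num.sqrt (\sum_i a i ^+ 2) + Num.sqrt (\sum_i b i ^+ 2).
Proof.
have Sa_ge0 : 0 <= \sum_i a i ^+ 2 by apply: sumr_ge0 => i _; exact: sqr_ge0.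
have Sb_ge0 : 0 <= \sum_i b i ^+ 2 by apply: sumr_ge0 => i _; exact: sqr_ge0.
rewrite -[leRHS]ger0_norm ?addr_ge0 ?sqrtr_ge0 // -sqrtr_sqr; apply: ler_wsqrtr.
have -> : \sum_i (a i + b i) ^+ 2 =
    \sum_i a i ^+ 2 + 2 * \sum_i a i * b i + \sum_i b i ^+ 2.
  by rewrite mulr_sumr -!big_split /=; apply: eq_bigr => i _; ring.
rewrite sqrrD !sqr_sqrtr // lerD2r lerD2l; have := cauchy_schwarz a b; lra.
Qed.

End CauchySchwarz.

Section ComplexNorms.
Variable R : realType.
Local Notation C := (complex R).
Local Open Scope complex_scope.

Lemma cRE (r : R) : cR r = r%:C. Proof. by []. Qed.

Lemma cmodE (z : C) : (cmod z)%:C = `|z|.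
Proof. by case: z => a b; rewrite normc_def. Qed.

Lemma cmod_ge0 (z : C) : 0 <= cmod z.
Proof. by case: z => a b; exact: sqrtr_ge0. Qed.

Lemma cmodM (u v : C) : cmod (u * v) = cmod u * cmod v.
Proof. by apply: complexI; rewrite rmorphM /= !cmodE normrM. Qed.

Lemma cmodR (r : R) : cmod (cR r) = `|r|.
Proof. by apply: complexI; rewrite cmodE cRE normc_def /= expr0n addr0 sqrtr_sqr. Qed.

Lemma cmod0 : cmod (0 : C) = 0.
Proof. by rewrite -[0 : C]/(cR 0) cmodR normr0. Qed.

Lemma ler_cmodD (u v : C) : cmod (u + v) <= cmod u + cmod v.
Proof. by rewrite -lecR rmorphD /= !cmodE ler_normD. Qed.

Lemma ler_cmod_sum (I : Type) (s : seq I) (F : I -> C) :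
  cmod (\sum_(i <- s) F i) <= \sum_(i <- s) cmod (F i).
Proof.
elim: s => [|i s IHs]; first by rewrite !big_nil cmod0.
by rewrite !big_cons; apply: le_trans (ler_cmodD _ _) _; rewrite lerD2l.
Qed.

Lemma eq_cfrob n (u v : 'I_n -> C) : u =1 v -> cfrob u = cfrob v.
Proof. by move=> uv; rewrite /cfrob; under eq_bigr do rewrite uv. Qed.

Lemma ler_cfrob n (v : 'I_n -> C) (w : 'I_n -> R) :
  (forall i, cmod (v i) <= w i) -> cfrob v <= Num.sqrt (\sum_i w i ^+ 2).
Proof.
move=> vw; apply/ler_wsqrtr/ler_sum => i _.
by rewrite !expr2 ler_pM ?cmod_ge0.
Qed.

Lemma ler_cfrobD n (u v : 'I_n -> C) :
  cfrob (fun i => u i + v i) <= cfrob u + cfrob v.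
Proof.
apply: le_trans (minkowski (fun i => cmod (u i)) (fun i => cmod (v i))).
by apply: ler_cfrob => i; exact: ler_cmodD.
Qed.

Lemma ler_cfrob_sum (I : Type) (s : seq I) n (F : I -> 'I_n -> C) :
  cfrob (fun k => \sum_(i <- s) F i k) <= \sum_(i <- s) cfrob (F i).
Proof.
elim: s => [|i s IHs].
  rewrite big_nil (@eq_cfrob n _ (fun=> 0)) => [|k]; last by rewrite big_nil.
  by rewrite /cfrob big1 ?sqrtr0 // => k _; rewrite cmod0 expr0n.
rewrite big_cons (@eq_cfrob n _ (fun k => F i k + \sum_(j <- s) F j k)) => [|k];
  last by rewrite big_cons.
by apply: le_trans (ler_cfrobD _ _) _; rewrite lerD2l.
Qed.

Lemma ler_sum_cmod_mul n (a : 'I_n -> R) (v : 'I_n -> C) :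
  \sum_i `|a i| * cmod (v i) <= Num.sqrt (\sum_i a i ^+ 2) * cfrob v.
Proof.
apply: le_trans (cauchy_schwarz _ _) _.
rewrite (eq_bigr (fun i => a i ^+ 2)) // => i _.
by rewrite real_normK ?num_real.
Qed.

Lemma ler_cmod_dot n (a : 'I_n -> R) (v : 'I_n -> C) :
  cmod (\sum_i cR (a i) * v i) <= Num.sqrt (\sum_i a i ^+ 2) * cfrob v.
Proof.
apply: le_trans (ler_cmod_sum _ _) _.
by under eq_bigr do rewrite cmodM cmodR; exact: ler_sum_cmod_mul.
Qed.

Lemma cinfnorm_ge0 n (v : 'I_n -> C) : 0 <= cinfnorm v.
Proof.
rewrite /cinfnorm; elim/big_ind: _ => //; last by move=> i _; exact: cmod_ge0.
by move=> s t s_ge0 _; rewrite le_max s_ge0.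
Qed.

Lemma ler_cinfnorm n (v : 'I_n -> C) i : cmod (v i) <= cinfnorm v.
Proof. exact: le_bigmax. Qed.

End ComplexNorms.

Section Model.
Variable R : realType.
Local Notation C := (complex R).
Local Open Scope complex_scope.

Lemma mode23v_mode23 a b c b' c' k2 k3 (T : 'I_a -> 'I_b -> 'I_c -> R)
    (Q2 : 'M[R]_(b', b)) (Q3 : 'M[R]_(c', c))
    (B : 'M[C]_(b', k2)) (Cm : 'M[C]_(c', k3)) r s n :
  mode23v (mode23 T Q2 Q3) (fun j => B j r) (fun p => Cm p s) n =
  mode23v T (fun j => (map_mx (real_complex R) Q2^T *m B) j r)
            (fun p => (map_mx (real_complex R) Q3^T *m Cm) p s) n.
Proof.
pose F j p j' p' := (T n j p)%:C * (Q2 j' j)%:C * (Q3 p' p)%:C * B j' r * Cm p' s.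
transitivity (\sum_(j' < b') \sum_(p' < c') \sum_(j < b) \sum_(p < c) F j p j' p').
  apply: eq_bigr => j' _; apply: eq_bigr => p' _.
  rewrite cRE rmorph_sum !mulr_suml; apply: eq_bigr => j _.
  rewrite rmorph_sum !mulr_suml; apply: eq_bigr => p _.
  by rewrite !rmorphM /= /F; ring.
transitivity (\sum_(j < b) \sum_(p < c) \sum_(j' < b') \sum_(p' < c') F j p j' p');
  last first.
  apply: eq_bigr => j _; apply: eq_bigr => p _.
  rewrite !mxE -mulrA big_distrlr mulr_sumr; apply: eq_bigr => j' _ /=.
  rewrite mulr_sumr; apply: eq_bigr => p' _.
  by rewrite !mxE /F cRE; ring.
under eq_bigr do rewrite exchange_big.
rewrite [LHS]exchange_big; apply: eq_bigr => j _ /=.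
under eq_bigr do rewrite exchange_big.
by rewrite [LHS]exchange_big.
Qed.

Lemma model_mode23 N M1 b c b' c' R1 R2 R3 (H : 'M[C]_(N, M1))
    (T : 'I_N -> 'I_b -> 'I_c -> R) (Q2 : 'M[R]_(b', b)) (Q3 : 'M[R]_(c', c))
    (G : 'I_R1 -> 'I_R2 -> 'I_R3 -> C) (A : 'M[C]_(M1, R1))
    (B : 'M[C]_(b', R2)) (Cm : 'M[C]_(c', R3)) :
  model H (mode23 T Q2 Q3) G A B Cm
  =1 model H T G A (map_mx (real_complex R) Q2^T *m B)
                   (map_mx (real_complex R) Q3^T *m Cm).
Proof.
move=> n; apply: eq_bigr => r1 _; apply: eq_bigr => r2 _; apply: eq_bigr => r3 _.
by rewrite mode23v_mode23.
Qed.

Lemma model_tensorB N M1 b c R1 R2 R3 (H : 'M[C]_(N, M1))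
    (T1 T2 : 'I_N -> 'I_b -> 'I_c -> R) (G : 'I_R1 -> 'I_R2 -> 'I_R3 -> C)
    (A : 'M[C]_(M1, R1)) (B : 'M[C]_(b, R2)) (Cm : 'M[C]_(c, R3)) n :
  model H T1 G A B Cm n - model H T2 G A B Cm n =
  model H (fun n j p => T1 n j p - T2 n j p) G A B Cm n.
Proof.
rewrite -!sumrB; apply: eq_bigr => r1 _; rewrite -sumrB; apply: eq_bigr => r2 _.
rewrite -sumrB; apply: eq_bigr => r3 _; rewrite -mulrBr -sumrB; congr (_ * _).
apply: eq_bigr => j _; rewrite -sumrB; apply: eq_bigr => p _.
by rewrite !cRE rmorphB /=; ring.
Qed.

Lemma ler_cmod_mode23v a b c (E : 'I_a -> 'I_b -> 'I_c -> R)
    (v : 'I_b -> C) (w : 'I_c -> C) n :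
  cmod (mode23v E v w n) <=
  Num.sqrt (\sum_(j < b) \sum_(p < c) E n j p ^+ 2) * cfrob v * cfrob w.
Proof.
pose t j := Num.sqrt (\sum_(p < c) E n j p ^+ 2).
have -> : mode23v E v w n = \sum_j v j * \sum_p cR (E n j p) * w p.
  apply: eq_bigr => j _; rewrite mulr_sumr; apply: eq_bigr => p _; ring.
apply: le_trans (ler_cmod_sum _ _) _.
apply: (@le_trans _ _ ((\sum_j `|t j| * cmod (v j)) * cfrob w)).
  rewrite mulr_suml; apply: ler_sum => j _.
  rewrite cmodM ger0_norm ?sqrtr_ge0 // [t j * _]mulrC -mulrA ler_wpM2l ?cmod_ge0 //.
  exact: ler_cmod_dot.
rewrite ler_wpM2r ?sqrtr_ge0 //; apply: le_trans (ler_sum_cmod_mul _ _) _.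
rewrite (eq_bigr (fun j => \sum_p E n j p ^+ 2)) // => j _.
by rewrite sqr_sqrtr // sumr_ge0 // => p _; exact: sqr_ge0.
Qed.

Lemma ler_cfrob_model_term N b c (E : 'I_N -> 'I_b -> 'I_c -> R) (g : C)
    (h : 'I_N -> C) (v : 'I_b -> C) (w : 'I_c -> C) :
  cfrob (fun n => g * h n * mode23v E v w n)
  <= rfrob3 E * (cmod g * cinfnorm h * cfrob v * cfrob w).
Proof.
set K := cmod g * _ * _ * _.
have K_ge0 : 0 <= K by rewrite !mulr_ge0 ?cmod_ge0 ?cinfnorm_ge0 ?sqrtr_ge0.
pose t n := Num.sqrt (\sum_(j < b) \sum_(p < c) E n j p ^+ 2).
apply: le_trans (@ler_cfrob _ _ _ (fun n => K * t n) _) _.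
  move=> n; rewrite !cmodM.
  rewrite [leRHS](_ : _ = cmod g * cinfnorm h * (t n * cfrob v * cfrob w));
    last by rewrite /K; ring.
  apply: ler_pM; rewrite ?mulr_ge0 ?cmod_ge0 //; last exact: ler_cmod_mode23v.
  by rewrite ler_wpM2l ?cmod_ge0 ?ler_cinfnorm.
rewrite (eq_bigr (fun n => K ^+ 2 * \sum_j \sum_p E n j p ^+ 2)) => [|n _]; last first.
  by rewrite exprMn sqr_sqrtr // !sumr_ge0 // => j _; apply: sumr_ge0 => p _;
     exact: sqr_ge0.
by rewrite -mulr_sumr sqrtrM ?sqr_ge0 // sqrtr_sqr ger0_norm // mulrC.
Qed.

Lemma ler_cfrob_model N M1 b c R1 R2 R3 (H : 'M[C]_(N, M1))
    (E : 'I_N -> 'I_b -> 'I_c -> R) (G : 'I_R1 -> 'I_R2 -> 'I_R3 -> C)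
    (A : 'M[C]_(M1, R1)) (B : 'M[C]_(b, R2)) (Cm : 'M[C]_(c, R3)) :
  cfrob (model H E G A B Cm)
  <= rfrob3 E * \sum_(r1 < R1) \sum_(r2 < R2) \sum_(r3 < R3)
       cmod (G r1 r2 r3) * cinfnorm (HAcol H A r1)
       * cfrob (fun j => B j r2) * cfrob (fun p => Cm p r3).
Proof.
apply: le_trans (ler_cfrob_sum _ _) _; rewrite mulr_sumr; apply: ler_sum => r1 _.
apply: le_trans (ler_cfrob_sum _ _) _; rewrite mulr_sumr; apply: ler_sum => r2 _.
apply: le_trans (ler_cfrob_sum _ _) _; rewrite mulr_sumr; apply: ler_sum => r3 _.
exact: ler_cfrob_model_term.
Qed.
End Model.

Local Open Scope classical_set_scope.

Theorem theorem3 (R : realType) (x y : int -> complex R) (t0 : int)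
  (N M1 M2 P R1 R2 R3 M2t Pt : nat)
  (hN : (0 < N)%N) (hM1 : (0 < M1)%N) (hM2 : (0 < M2)%N) (hP : (0 < P)%N)
  (hR1 : (0 < R1)%N) (hR2 : (0 < R2)%N) (hR3 : (0 < R3)%N)
  (hM2t : (0 < M2t)%N) (hPt : (0 < Pt)%N)
  (hM2tle : (M2t <= M2)%N) (hPtle : (Pt <= P)%N)
  (U2 : 'M[R]_(M2, M2t)) (U3 : 'M[R]_(P, Pt))
  (hU2 : U2^T *m U2 = 1%:M) (hU3 : U3^T *m U3 = 1%:M)
  (Gs : 'I_R1 -> 'I_R2 -> 'I_R3 -> complex R) (As : 'M[complex R]_(M1, R1))
  (Bs : 'M[complex R]_(M2, R2)) (Cs : 'M[complex R]_(P, R3))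
  (hmin : forall (G : 'I_R1 -> 'I_R2 -> 'I_R3 -> complex R)
            (A : 'M[complex R]_(M1, R1)) (B : 'M[complex R]_(M2, R2))
            (Cm : 'M[complex R]_(P, R3)),
      objective (yvec y t0 N) (Hmat x t0 N M1) (Mten x t0 N M2 P) Gs As Bs Cs
      <= objective (yvec y t0 N) (Hmat x t0 N M1) (Mten x t0 N M2 P) G A B Cm) :
  let yv := yvec y t0 N in
  let H := Hmat x t0 N M1 in
  let M := Mten x t0 N M2 P in
  let Mt := mode23 M U2^T U3^T in
  let Mh := mode23 M (U2 *m U2^T) (U3 *m U3^T) in
  let mTu := objective yv H M Gs As Bs Cs in
  inf [set v : R | exists (G : 'I_R1 -> 'I_R2 -> 'I_R3 -> complex R)
          (A : 'M[complex R]_(M1, R1)) (Bt : 'M[complex R]_(M2t, R2))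
          (Ct : 'M[complex R]_(Pt, R3)),
          v = objective yv H Mt G A Bt Ct]
  <= mTu + rfrob3 (fun n j p => M n j p - Mh n j p)
       * \sum_(r1 < R1) \sum_(r2 < R2) \sum_(r3 < R3)
           cmod (Gs r1 r2 r3) * cinfnorm (HAcol H As r1)
           * cfrob (fun j => Bs j r2) * cfrob (fun p => Cs p r3).
Proof.
cbv zeta; set yv := yvec y t0 N; set H := Hmat x t0 N M1; set M := Mten x t0 N M2 P.
set Mt := mode23 M U2^T U3^T; set Mh := mode23 M (U2 *m U2^T) (U3 *m U3^T).
pose Bt := map_mx (real_complex R) U2^T *m Bs.
pose Ct := map_mx (real_complex R) U3^T *m Cs.
have compressed_model : model H Mt Gs As Bt Ct =1 model H Mh Gs As Bs Cs.
  by move=> n; rewrite !model_mode23 !trmx_mul !trmxK !mulmxA -!map_mxM.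
apply: (@le_trans _ _ (objective yv H Mt Gs As Bt Ct)).
  by apply: ge_inf; [exists 0 => _ [G [A [B [Cm ->]]]]; exact: sqrtr_ge0
                    | exists Gs, As, Bt, Ct].
rewrite /objective (@eq_cfrob _ _ _ (fun n => (yv n - model H M Gs As Bs Cs n)
          + model H (fun n j p => M n j p - Mh n j p) Gs As Bs Cs n)) => [|n].
  by apply: le_trans (ler_cfrobD _ _) _; rewrite lerD2l ler_cfrob_model.
by rewrite compressed_model -model_tensorB addrA subrK.
Qed.
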